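(* Let $G$ be a sub-$2$-permutable graph. Then $\chi_i(G\,\square\,K_2)=\Delta(G\,\square\,K_2)+1$.
   Context: All graphs are finite and simple. $K^-_{2n}$ is the complete graph on $2n$ vertices with a perfect matching removed. A homomorphism $f:G\to H$ is a map $V(G)\to V(H)$ with $f(u)f(v)\in E(H)$ whenever $uv\in E(G)$; it is locally injective if for every vertex $v$, $f$ is injective on $N(v)$. A graph $G$ (not necessarily regular) is sub-$2$-permutable if it admits a locally injective homomorphism to $K^-_{\Delta(G)+2}$ (in particular $\Delta(G)$ is even). An incidence of $G$ is a pair $(v,e)$ with $v\in e\in E(G)$; incidences $(v,e),(u,f)$ are adjacent if $v=u$, or $e=f$, or $vu\in\{e,f\}$; an incidence coloring gives adjacent incidences distinct colors; $\chi_i(G)$ is the least number of colors of an incidence coloring. $\Delta$ denotes maximum degree. $G\,\square\,H$ is the Cartesian product: vertex set $V(G)\times V(H)$, $(u,v)\sim(u',v')$ iff ($uu'\in E(G)$, $v=v'$) or ($u=u'$, $vv'\in E(H)$). *)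

From mathcomp Require Import all_boot.
Set Implicit Arguments. Unset Strict Implicit. Unset Printing Implicit Defensive.

Definition simple_graph (T : finType) (e : rel T) : Prop :=
  symmetric e /\ irreflexive e.

Definition maxdeg (T : finType) (e : rel T) : nat :=
  \max_(v : T) #|[set u | e v u]|.

(* K^-_m : vertices 'I_m, the removed perfect matching pairs 2k with 2k+1;
   i ~ j iff i and j are in different matching pairs (only used for m even). *)
Definition Kminus (m : nat) : rel 'I_m := fun i j => i./2 != j./2.

Definition K2 : rel bool := fun a b => a != b.

Definition box (T1 T2 : finType) (e1 : rel T1) (e2 : rel T2) : rel (T1 * T2) :=
  fun x y => (e1 x.1 y.1 && (x.2 == y.2)) || ((x.1 == y.1) && e2 x.2 y.2).

Definition graph_hom (T1 T2 : finType) (e1 : rel T1) (e2 : rel T2) (f : T1 -> T2) : Prop :=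
  forall u v, e1 u v -> e2 (f u) (f v).

Definition locally_injective (T1 T2 : finType) (e1 : rel T1) (f : T1 -> T2) : Prop :=
  forall v, {in [pred u | e1 v u] &, injective f}.

Definition sub2permutable (T : finType) (e : rel T) : Prop :=
  ~~ odd (maxdeg e) /\
  exists f : T -> 'I_(maxdeg e + 2),
    graph_hom e (@Kminus (maxdeg e + 2)) f /\ locally_injective e f.

(* An incidence (v, vw) is encoded by the arc (v, w) with vw an edge. *)
Notation incidence e := {p | e p.1 p.2}.

Definition same_edge (T : finType) (v w u x : T) : bool :=
  ((v == u) && (w == x)) || ((v == x) && (w == u)).

(* (v,e),(u,f) with e = vw, f = ux are adjacent iff they are distinct and
   v = u, or e = f, or vu = e (i.e. u = w), or vu = f (i.e. v = x). *)
Definition inc_adj (T : finType) (e : rel T) (a b : incidence e) : bool :=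
  (a != b) &&
  (let: (v, w) := val a in let: (u, x) := val b in
   [|| v == u, same_edge v w u x, same_edge v u v w | same_edge v u u x]).

Definition inc_colorable (T : finType) (e : rel T) (k : nat) : bool :=
  [exists c : {ffun incidence e -> 'I_k},
     [forall a, forall b, inc_adj a b ==> (c a != c b)]].

Lemma inc_colorable_ex (T : finType) (e : rel T) : exists k, inc_colorable e k.
Proof.
exists #|{: incidence e}|; apply/existsP; exists [ffun a => enum_rank a].
apply/forallP=> a; apply/forallP=> b; apply/implyP=> /andP[nab _].
by rewrite !ffunE; apply: contra nab => /eqP/enum_rank_inj ->.
Qed.

Definition inc_chrom (T : finType) (e : rel T) : nat := ex_minn (inc_colorable_ex e).

(* Lower bound: at a vertex v of maximum degree, the incidences (w,vw) for a
   fixed neighbour w together with all (v,vu) are pairwise adjacent, so any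
   incidence colouring uses more than Delta(G [] K2) = Delta(G) + 1 colours.
   Upper bound: colouring every incidence (v,vw) by the colour of its far end
   w is proper as soon as the vertex colouring separates vertices at distance
   at most 2.  Such a colouring of G [] K2 with Delta(G) + 2 colours comes from
   the locally injective homomorphism f : G -> K^-_{Delta+2}: use f on one
   copy of G and the matching partner of f on the other copy. *)
From mathcomp Require Import all_boot zify.
Set Implicit Arguments. Unset Strict Implicit. Unset Printing Implicit Defensive.

Section IncidenceColoring.
Variables (T : finType) (e : rel T).
Hypotheses (e_sym : symmetric e) (e_irr : irreflexive e).

Definition dist2_coloring (k : nat) (m : T -> 'I_k) : Prop :=
  (forall u v, e u v -> m u != m v) /\
  (forall v u w, e v u -> e v w -> u != w -> m u != m w).

Lemma dist2_coloring_inc_colorable k (m : T -> 'I_k) :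
  dist2_coloring m -> inc_colorable e k.
Proof.
move=> [m_proper m_dist2].
apply/existsP; exists [ffun a : incidence e => m (val a).2].
apply/forallP => -[[v w] vw]; apply/forallP => -[[u x] ux].
apply/implyP => /andP[neq_inc /=]; rewrite !ffunE /=.
have neq_arc : (v, w) != (u, x) by apply: contraNneq neq_inc => E; apply/eqP/val_inj.
clear neq_inc.
case/or4P.
- by move/eqP => vu; subst u; apply: (m_dist2 v) => //; apply: contraNneq neq_arc => ->.
- case/orP => /andP[/eqP Ev /eqP Ew]; subst; first by rewrite eqxx in neq_arc.
  by rewrite eq_sym; apply: m_proper.
- case/orP => /andP[/eqP Ev /eqP Eu]; subst; first exact: m_proper.
  by rewrite e_irr in vw.
- case/orP => /andP[/eqP Ev /eqP Eu]; subst; first by rewrite e_irr in ux.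
  by rewrite eq_sym; apply: m_proper.
Qed.

Definition out_incidences (z : T) : {set incidence e} := [set a | (val a).1 == z].

Lemma card_out_incidences z : #|out_incidences z| = #|[set u | e z u]|.
Proof.
rewrite -(card_in_imset (f := fun a : incidence e => (val a).2)).
  apply: eq_card => u; rewrite inE; apply/imsetP/idP.
    by case=> -[[v w] vw]; rewrite inE /= => /eqP <- ->.
  by move=> zu; exists (exist _ (z, u) zu); rewrite ?inE.
move=> [[v w] vw] [[v' w'] vw']; rewrite !inE /= => /eqP vz /eqP v'z ww'.
by apply: val_inj; rewrite /= ww' vz v'z.
Qed.

Lemma deg_lt_inc_colorable z k :
  0 < #|[set u | e z u]| -> inc_colorable e k -> #|[set u | e z u]| < k.
Proof.
case/card_gt0P => w; rewrite inE => zw /existsP[c /forallP c_proper].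
have wz : e w z by rewrite e_sym.
pose a0 : incidence e := exist _ (w, z) wz.
have a0_out : a0 \notin out_incidences z.
  by rewrite inE /=; apply: contraTneq zw => ->; rewrite e_irr.
(* a0 and the outgoing incidences of z are pairwise adjacent *)
have c_inj : {in a0 |: out_incidences z &, injective c}.
  move=> a b; rewrite !inE => Ha Hb cab; apply/eqP/negPn/negP => nab.
  suff: c a != c b by rewrite cab eqxx.
  clear cab; apply: (implyP (forallP (c_proper a) b)); rewrite /inc_adj nab /=.
  case: a b nab Ha Hb => [[v x] vx] [[u y] uy] /= _.
  by do 2!case/orP=> [/eqP[-> ->]|/eqP->]; rewrite /same_edge !eqxx ?orbT.
have := max_card (c @: (a0 |: out_incidences z)).
by rewrite card_in_imset // cardsU1 a0_out card_out_incidences card_ord.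
Qed.

Lemma inc_chromP : inc_colorable e (inc_chrom e).
Proof. by rewrite /inc_chrom; case: ex_minnP. Qed.

Lemma inc_chrom_min k : inc_colorable e k -> inc_chrom e <= k.
Proof. by rewrite /inc_chrom; case: ex_minnP => n _; apply. Qed.

End IncidenceColoring.

Lemma maxdeg_attained (T : finType) (e : rel T) (x0 : T) :
  exists v, #|[set u | e v u]| = maxdeg e.
Proof.
have [|v max_v] := @eq_bigmax T (fun v => #|[set u | e v u]|).
  by apply/card_gt0P; exists x0.
by exists v; rewrite /maxdeg max_v.
Qed.

Section BoxK2.
Variables (T : finType) (e : rel T).

Lemma box_sym (T' : finType) (e' : rel T') :
  symmetric e -> symmetric e' -> symmetric (box e e').
Proof.
by move=> sym sym' [v b] [u c]; rewrite /box /= sym sym' (eq_sym v) (eq_sym b).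
Qed.

Lemma box_irr (T' : finType) (e' : rel T') :
  irreflexive e -> irreflexive e' -> irreflexive (box e e').
Proof. by move=> irr irr' [v b]; rewrite /box /= irr irr' andbF. Qed.

Lemma deg_box_K2 v b : #|[set y | box e K2 (v, b) y]| = #|[set u | e v u]|.+1.
Proof.
have -> : [set y | box e K2 (v, b) y] =
          (v, ~~ b) |: [set (u, b) | u in [set u | e v u]].
  apply/setP => -[u c]; rewrite !inE /box /K2 /=.
  apply/idP/idP.
    case/orP=> [/andP[vu /eqP <-]|/andP[/eqP <- bc]].
      by apply/orP; right; apply/imsetP; exists u; rewrite ?inE.
    by rewrite xpair_eqE eqxx; case: b c bc => -[].
  case/orP=> [/eqP[<- ->]|/imsetP[x]]; first by case: b; rewrite eqxx /= orbT.
  by rewrite inE => vx [-> ->]; rewrite vx eqxx.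
have other_side : (v, ~~ b) \notin [set (u, b) | u in [set u | e v u]].
  by apply/imsetP => -[x _ [_]]; case: b.
by rewrite cardsU1 other_side card_imset // => x y [].
Qed.

Lemma maxdeg_box_K2 (x0 : T) : maxdeg (box e K2) = (maxdeg e).+1.
Proof.
apply/eqP; rewrite eqn_leq; apply/andP; split.
  apply/bigmax_leqP => -[v b] _; rewrite deg_box_K2 ltnS.
  exact: (leq_bigmax (F := fun v => #|[set u | e v u]|)).
have [v <-] := maxdeg_attained e x0; rewrite -(deg_box_K2 v true).
exact: (leq_bigmax (F := fun y => #|[set z | box e K2 y z]|) (v, true)).
Qed.

End BoxK2.

(* [mate i] is the partner of [i] in the matching 2k -- 2k+1 removed from K_n. *)
Definition mate (i : nat) : nat := i./2.*2 + ~~ odd i.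

Lemma half_mate i : (mate i)./2 = i./2.
Proof. by rewrite /mate addnC half_bit_double. Qed.

Lemma odd_mate i : odd (mate i) = ~~ odd i.
Proof. by rewrite /mate oddD odd_double oddb. Qed.

Lemma mateK : involutive mate.
Proof. by move=> i; rewrite {1}/mate half_mate odd_mate negbK addnC odd_double_half. Qed.

Lemma mate_lt n i : ~~ odd n -> i < n -> mate i < n.
Proof.
move=> even_n lt_in; rewrite /mate.
have := odd_double_half i; have := odd_double_half n.
by move: even_n; case: (odd n); case: (odd i) => /=; lia.
Qed.

Definition side (b : bool) (i : nat) : nat := if b then i else mate i.

Lemma half_side b i : (side b i)./2 = i./2.
Proof. by case: b; rewrite /= ?half_mate. Qed.

Lemma odd_side b i : odd (side b i) = (odd i == b).
Proof. by case: b; rewrite /= ?odd_mate; case: (odd i). Qed.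

Lemma side_inj b : injective (side b).
Proof. by case: b => //=; apply: can_inj mateK. Qed.

Lemma neq_side b c i : b != c -> side b i != side c i.
Proof.
by apply: contraNneq => /(congr1 odd); rewrite !odd_side; case: b c (odd i) => -[] [].
Qed.

Lemma side_lt n b i : ~~ odd n -> i < n -> side b i < n.
Proof. by case: b => //=; apply: mate_lt. Qed.

Section LiftToBoxK2.
Variables (T : finType) (e : rel T) (n : nat) (f : T -> 'I_n).
Hypotheses (even_n : ~~ odd n) (f_hom : graph_hom e (@Kminus n) f)
           (f_inj : locally_injective e f).

Definition lift_side (y : T * bool) : 'I_n := insubd (f y.1) (side y.2 (f y.1)).

Lemma val_lift_side y : val (lift_side y) = side y.2 (f y.1).
Proof. by rewrite val_insubd side_lt. Qed.

Lemma lift_side_neq y z :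
  side y.2 (f y.1) != side z.2 (f z.1) -> lift_side y != lift_side z.
Proof. by rewrite -!val_lift_side; apply: contraNneq => ->. Qed.

Lemma side_neq_hom b c u v : e u v -> side b (f u) != side c (f v).
Proof. by move/f_hom; apply: contraNneq => /(congr1 half); rewrite !half_side => ->. Qed.

Lemma lift_side_dist2 : dist2_coloring (box e K2) lift_side.
Proof.
split=> [[u b] [v c]|[v b] [u c] [w d]]; rewrite /box /K2 /=.
  move=> uv; apply: lift_side_neq => /=.
  case/orP: uv => /andP[uv bc]; first exact: side_neq_hom.
  by rewrite (eqP uv); apply: neq_side.
move=> vu vw neq_uw; apply: lift_side_neq => /=.
case/orP: vu => /andP[vu bc]; case/orP: vw => /andP[vw bd].
- rewrite -(eqP bc) -(eqP bd); apply: contra neq_uw => /eqP /side_inj /val_inj fuw.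
  by rewrite -(eqP bc) -(eqP bd) (@f_inj v u w) ?inE.
- by rewrite -(eqP vw) eq_sym side_neq_hom.
- by rewrite -(eqP vu) side_neq_hom.
- move: neq_uw; rewrite -(eqP vu) -(eqP vw).
  by case: b c d bc bd => [] [] [] //; rewrite eqxx.
Qed.

End LiftToBoxK2.

Theorem mainTheorem9 (T : finType) (e : rel T) (x0 : T) :
  simple_graph e -> sub2permutable e ->
  inc_chrom (box e K2) = maxdeg (box e K2) + 1.
Proof.
move=> [e_sym e_irr] [even_deg [f [f_hom f_inj]]].
have boxB_sym : symmetric (box e K2) by apply: box_sym => // ? ?; rewrite /K2 eq_sym.
have boxB_irr : irreflexive (box e K2) by apply: box_irr => // ?; rewrite /K2 eqxx.
have even_n : ~~ odd (maxdeg e + 2) by rewrite addnC oddD.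
have [v deg_v] := maxdeg_attained e x0.
apply/eqP; rewrite (maxdeg_box_K2 e x0) addn1 eqn_leq; apply/andP; split.
  rewrite -addn2; apply: inc_chrom_min.
  apply: (dist2_coloring_inc_colorable boxB_irr).
  exact: lift_side_dist2 even_n f_hom f_inj.
rewrite -deg_v -(deg_box_K2 e v true).
apply: (deg_lt_inc_colorable boxB_sym boxB_irr); last exact: inc_chromP.
by rewrite deg_box_K2.
Qed.
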